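(* Let $\varphi$ be any forecasting system and $\omega\in\Omega$. Then $\omega$ is Schnorr random for $\varphi$ if and only if there is no recursive, positive, rational-valued test supermartingale $R$ for $\varphi$ and growth function $\rho$ with $\limsup_{n\to\infty}[R(\omega^n)-\rho(n)]>0$.
   Context: Notation: $\mathbb N_0=\{0,1,\dots\}$; $\Omega=\{0,1\}^{\mathbb N}$; $\mathbb S$ finite binary strings, $\square$ empty string, $\omega^n$ first $n$ entries of $\omega$. $\mathcal I$: nonempty closed subintervals of $[0,1]$; $\overline E_I(f)=\max_{p\in I}[pf(1)+(1-p)f(0)]$. Forecasting system: any $\varphi:\mathbb S\to\mathcal I$. Supermartingale for $\varphi$: $M:\mathbb S\to\mathbb R$ with $\overline E_{\varphi(s)}(M(s\,\cdot))\le M(s)$ for all $s$ ($M(s\,\cdot):x\mapsto M(sx)$); test supermartingale: non-negative with $M(\square)=1$. A real map $r:\mathbb S\to\mathbb R$ is computable if there is a recursive $q:\mathbb S\times\mathbb N_0\to\mathbb Q$ with $|r(s)-q(s,N)|\le2^{-N}$; a rational-valued process is recursive if it is a recursive map $\mathbb S\to\mathbb Q$. A growth function is a recursive, non-decreasing, unbounded $\rho:\mathbb N_0\to\mathbb N_0$. $\omega$ is Schnorr random for $\varphi$ if $\limsup_n[T(\omega^n)-\rho(n)]\le0$ for all computable test supermartingales $T$ for $\varphi$ and all growth functions $\rho$. *)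

From Stdlib Require Import Reals QArith Qreals List Lia.
From Coquelicot Require Import Coquelicot.
Open Scope R_scope.

Definition bstring := list bool.
(* Omega = {0,1}^N, with true = 1, false = 0. *)
Definition outcome_seq := nat -> bool.
Definition prefix (omega : outcome_seq) (n : nat) : bstring :=
  map omega (seq 0 n).

Record interval := mkInterval {
  lo : R; hi : R;
  lo_ge0 : 0 <= lo; lo_le_hi : lo <= hi; hi_le1 : hi <= 1 }.

Definition forecasting_system := bstring -> interval.

(* Upper expectation over I of f : {0,1} -> R is max_{p in I} [p f(1) + (1-p) f(0)];
   "upper expectation <= c" is stated as: every p in I gives value <= c. *)
Definition upper_exp_le (I : interval) (f1 f0 c : R) : Prop :=
  forall p, lo I <= p <= hi I -> p * f1 + (1 - p) * f0 <= c.

Definition supermartingale (phi : forecasting_system) (M : bstring -> R) : Prop :=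
  forall s, upper_exp_le (phi s) (M (s ++ true :: nil)) (M (s ++ false :: nil)) (M s).

Definition test_supermartingale (phi : forecasting_system) (M : bstring -> R) : Prop :=
  supermartingale phi M /\ (forall s, 0 <= M s) /\ M nil = 1.

Inductive code : Type :=
  | CZero : code
  | CSucc : code
  | CProj : nat -> code
  | CComp : code -> list code -> code
  | CPrec : code -> code -> code
  | CMin  : code -> code.

Inductive eval : code -> list nat -> nat -> Prop :=
  | ev_zero : forall xs, eval CZero xs 0%nat
  | ev_succ : forall x xs, eval CSucc (x :: xs) (S x)
  | ev_proj : forall (i : nat) (xs : list nat), (i < length xs)%nat -> eval (CProj i) xs (nth i xs 0%nat)
  | ev_comp : forall f gs xs ys y,
      evals gs xs ys -> eval f ys y -> eval (CComp f gs) xs y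
  | ev_prec0 : forall f g xs y, eval f xs y -> eval (CPrec f g) (0%nat :: xs) y
  | ev_precS : forall f g n xs y z,
      eval (CPrec f g) (n :: xs) y -> eval g (n :: y :: xs) z ->
      eval (CPrec f g) (S n :: xs) z
  | ev_min : forall f xs y,
      eval f (y :: xs) 0%nat ->
      (forall z, (z < y)%nat -> exists k, eval f (z :: xs) (S k)) ->
      eval (CMin f) xs y
with evals : list code -> list nat -> list nat -> Prop :=
  | evs_nil : forall xs, evals nil xs nil
  | evs_cons : forall g gs xs y ys,
      eval g xs y -> evals gs xs ys -> evals (g :: gs) xs (y :: ys).

Fixpoint enc_str (s : bstring) : nat :=
  match s with
  | nil => 0%nat
  | b :: s' => (2 * enc_str s' + (if b then 2 else 1))%nat
  end.

Definition cantor_pair (a b : nat) : nat := ((a + b) * (a + b + 1) / 2 + b)%nat.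

Definition enc_Z (z : Z) : nat :=
  match z with
  | Z0 => 0%nat
  | Zpos p => (2 * Pos.to_nat p)%nat
  | Zneg p => (2 * Pos.to_nat p - 1)%nat
  end.

Definition enc_Q (q : Q) : nat :=
  cantor_pair (enc_Z (Qnum q)) (Pos.to_nat (Qden q) - 1)%nat.

Definition recursive_SQ (q : bstring -> Q) : Prop :=
  exists c, forall s, eval c (enc_str s :: nil) (enc_Q (q s)).

Definition recursive_SNQ (q : bstring -> nat -> Q) : Prop :=
  exists c, forall s N, eval c (enc_str s :: N :: nil) (enc_Q (q s N)).

Definition recursive_NN (f : nat -> nat) : Prop :=
  exists c, forall n, eval c (n :: nil) (f n).

Definition computable_real_map (r : bstring -> R) : Prop :=
  exists q : bstring -> nat -> Q, recursive_SNQ q /\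
    forall s N, Rabs (r s - Q2R (q s N)) <= / 2 ^ N.

Definition growth_function (rho : nat -> nat) : Prop :=
  recursive_NN rho /\
  (forall m n, (m <= n)%nat -> (rho m <= rho n)%nat) /\
  (forall B, exists n, (B < rho n)%nat).

Definition schnorr_random (phi : forecasting_system) (omega : outcome_seq) : Prop :=
  forall (T : bstring -> R) (rho : nat -> nat),
    test_supermartingale phi T -> computable_real_map T -> growth_function rho ->
    Rbar_le (LimSup_seq (fun n => T (prefix omega n) - INR (rho n))) 0.

From Stdlib Require Import Reals QArith Qreals List.
From Coquelicot Require Import Coquelicot.
From Stdlib Require Import Lia Lra ZArith.
Open Scope R_scope.

(** One direction is immediate: an exact rational map is a computable real map.
    For the other, let [T] be a computable test supermartingale with rational
    approximations [q s N] (error at most [2^-N]) and [rho] a growth function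
    with [limsup (T(omega^n) - rho n) > 0].  We build the rational map
      [R(nil) = 1],  [R(s) = (max(0, q s (e s + 3)) + 1/(e s + 1)) / 2],
    where [e] is the string code.  Since [e] grows by a factor [3/2] from a
    string to its children, the extra weight [1/(e s + 1)] dominates the
    approximation errors, so [R] is a positive test supermartingale with
    [T/2 <= R]; hence [limsup (R(omega^n) - rho n / 2) > 0], and [rho / 2] is
    again a growth function. *)

Definition computes {A : Type} (input : A -> list nat) (f : A -> nat) : Prop :=
  exists c, forall a, eval c (input a) (f a).

Definition unary (n : nat) : list nat := n :: nil.
Definition binary (p : nat * nat) : list nat := fst p :: snd p :: nil.

Section Closure.
Local Open Scope nat_scope.
Variable A : Type.
Variable input : A -> list nat.

Lemma computes_ext (f g : A -> nat) :
  computes input f -> (forall a, f a = g a) -> computes input g.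
Proof. intros [c Hc] Hfg; exists c; intros a; rewrite <- Hfg; apply Hc. Qed.

Lemma computes_zero : computes input (fun _ => 0).
Proof. exists CZero; intros a; constructor. Qed.

Lemma computes_proj (i : nat) (f : A -> nat) :
  (forall a, nth_error (input a) i = Some (f a)) -> computes input f.
Proof.
  intros Hf; exists (CProj i); intros a.
  rewrite <- (@nth_error_nth _ _ _ _ 0 (Hf a)).
  constructor; apply nth_error_Some; rewrite Hf; discriminate.
Qed.

Lemma computes_comp1 (B : Type) (inB : B -> list nat) (H : B -> nat)
    (k : A -> B) (f : A -> nat) :
  computes input f -> computes inB H -> (forall a, inB (k a) = f a :: nil) ->
  computes input (fun a => H (k a)).
Proof.
  intros [cf Hf] [ch Hh] Hk; exists (CComp ch (cf :: nil)); intros a.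
  econstructor; [repeat econstructor; apply Hf | rewrite <- Hk; apply Hh].
Qed.

Lemma computes_comp2 (B : Type) (inB : B -> list nat) (H : B -> nat)
    (k : A -> B) (f g : A -> nat) :
  computes input f -> computes input g -> computes inB H ->
  (forall a, inB (k a) = f a :: g a :: nil) ->
  computes input (fun a => H (k a)).
Proof.
  intros [cf Hf] [cg Hg] [ch Hh] Hk; exists (CComp ch (cf :: cg :: nil)); intros a.
  econstructor; [repeat econstructor; [apply Hf | apply Hg] | rewrite <- Hk; apply Hh].
Qed.

Lemma computes_app1 (h : nat -> nat) (f : A -> nat) :
  computes unary h -> computes input f -> computes input (fun a => h (f a)).
Proof. intros Hh Hf; exact (computes_comp1 _ _ h f f Hf Hh (fun _ => eq_refl)). Qed.

Lemma computes_app2 (h : nat -> nat -> nat) (f g : A -> nat) :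
  computes binary (fun p => h (fst p) (snd p)) -> computes input f -> computes input g ->
  computes input (fun a => h (f a) (g a)).
Proof.
  intros Hh Hf Hg.
  exact (computes_comp2 _ _ _ (fun a => (f a, g a)) f g Hf Hg Hh (fun _ => eq_refl)).
Qed.

Lemma computes_succ (f : A -> nat) :
  computes input f -> computes input (fun a => S (f a)).
Proof.
  intros Hf; apply (computes_app1 S f); [|exact Hf].
  exists CSucc; intros n; constructor.
Qed.

Lemma computes_const (n : nat) : computes input (fun _ => n).
Proof. induction n; [apply computes_zero | apply computes_succ, IHn]. Qed.

End Closure.

Lemma computes_reindex (A B : Type) (inA : A -> list nat) (inB : B -> list nat)
    (H : B -> nat) (k : A -> B) :
  computes inB H -> (forall a, inB (k a) = inA a) -> computes inA (fun a => H (k a)).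
Proof. intros [c Hc] Hk; exists c; intros a; rewrite <- Hk; apply Hc. Qed.

Lemma computes_prec (P : Type) (inP : P -> list nat) (G : P -> nat)
    (H : nat -> nat -> P -> nat) (F : nat -> P -> nat) :
  computes inP G ->
  computes (fun t : nat * nat * P => fst (fst t) :: snd (fst t) :: inP (snd t))
           (fun t => H (fst (fst t)) (snd (fst t)) (snd t)) ->
  (forall p, F 0%nat p = G p) -> (forall n p, F (S n) p = H n (F n p) p) ->
  computes (fun t : nat * P => fst t :: inP (snd t)) (fun t => F (fst t) (snd t)).
Proof.
  intros [cg Hg] [ch Hh] F0 FS; exists (CPrec cg ch); intros [n p]; simpl.
  induction n as [|n IH].
  - rewrite F0; apply ev_prec0, Hg.
  - rewrite FS; eapply ev_precS; [exact IH | exact (Hh (n, F n p, p))].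
Qed.

Definition ternary (t : nat * nat * nat) : list nat :=
  fst (fst t) :: snd (fst t) :: snd t :: nil.

Section Arithmetic.
Local Open Scope nat_scope.

Lemma computes_prec_binary (G : nat -> nat) (H : nat -> nat -> nat -> nat)
    (F : nat -> nat -> nat) :
  computes unary G -> computes ternary (fun t => H (fst (fst t)) (snd (fst t)) (snd t)) ->
  (forall b, F 0 b = G b) -> (forall n b, F (S n) b = H n (F n b) b) ->
  computes binary (fun p => F (fst p) (snd p)).
Proof. exact (computes_prec nat unary G H F). Qed.

Lemma computes_prec_unary (g : nat) (H : nat -> nat -> nat) (F : nat -> nat) :
  computes binary (fun p => H (fst p) (snd p)) ->
  F 0 = g -> (forall n, F (S n) = H n (F n)) -> computes unary F.
Proof.
  intros HH F0 FS.
  assert (Hrec := computes_prec unit (fun _ => nil) (fun _ => g) (fun n y _ => H n y)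
                    (fun n _ => F n) (computes_const _ _ g)
                    (computes_reindex _ _ _ binary _ fst HH (fun _ => eq_refl))
                    (fun _ => F0) (fun n _ => FS n)).
  exact (computes_reindex _ _ unary _ _ (fun n => (n, tt)) Hrec (fun _ => eq_refl)).
Qed.

Lemma computes_add : computes binary (fun p => fst p + snd p).
Proof.
  apply (computes_prec_binary (fun b => b) (fun _ y _ => S y)).
  - now apply (computes_proj _ _ 0).
  - now apply computes_succ, (computes_proj _ _ 1).
  - reflexivity.
  - reflexivity.
Qed.

Lemma computes_mul : computes binary (fun p => fst p * snd p).
Proof.
  apply (computes_prec_binary (fun _ => 0) (fun _ y b => b + y)).
  - apply computes_zero.
  - apply (computes_app2 _ _ Nat.add); [apply computes_add | |];
      [now apply (computes_proj _ _ 2) | now apply (computes_proj _ _ 1)].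
  - reflexivity.
  - reflexivity.
Qed.

Lemma computes_pred : computes unary Nat.pred.
Proof.
  apply (computes_prec_unary 0 (fun n _ => n)); [|reflexivity|reflexivity].
  now apply (computes_proj _ _ 0).
Qed.

(* Truncated subtraction: recursion on the subtrahend computes [a - b] from
   [b; a], and swapping the arguments gives the usual order. *)
Lemma computes_sub : computes binary (fun p => fst p - snd p).
Proof.
  assert (Hrev : computes binary (fun p => snd p - fst p)).
  { apply (computes_prec_binary (fun a => a) (fun _ y _ => Nat.pred y) (fun b a => a - b)).
    - now apply (computes_proj _ _ 0).
    - apply (computes_app1 _ _ Nat.pred); [apply computes_pred|].
      now apply (computes_proj _ _ 1).
    - intros; lia.
    - intros; lia. }
  apply (computes_app2 _ _ (fun x y => y - x) snd fst Hrev);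
    [now apply (computes_proj _ _ 1) | now apply (computes_proj _ _ 0)].
Qed.

(* Parity and halving decode the integer code [enc_Z]. *)
Definition parity (n : nat) : nat := Nat.b2n (Nat.odd n).

Lemma parity_succ n : parity (S n) = 1 - parity n.
Proof. unfold parity; rewrite Nat.odd_succ, <- Nat.negb_odd; now destruct (Nat.odd n). Qed.

Lemma computes_parity : computes unary parity.
Proof.
  apply (computes_prec_unary 0 (fun _ y => 1 - y)); [|reflexivity|apply parity_succ].
  apply (computes_app2 _ _ Nat.sub); [apply computes_sub|apply computes_const|].
  now apply (computes_proj _ _ 1).
Qed.

Lemma computes_div2 : computes unary Nat.div2.
Proof.
  apply (computes_prec_unary 0 (fun n y => y + parity n)); [|reflexivity|].
  - apply (computes_app2 _ _ Nat.add); [apply computes_add| |].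
    + now apply (computes_proj _ _ 1).
    + apply (computes_app1 _ _ parity); [apply computes_parity|].
      now apply (computes_proj _ _ 0).
  - intros n; pose proof (Nat.div2_odd n); pose proof (Nat.div2_odd (S n)).
    pose proof (parity_succ n); unfold parity in *.
    destruct (Nat.odd n), (Nat.odd (S n)); simpl in *; lia.
Qed.

Fixpoint tri (n : nat) : nat := match n with 0 => 0 | S k => tri k + S k end.

Lemma computes_tri : computes unary tri.
Proof.
  apply (computes_prec_unary 0 (fun n y => y + S n)); [|reflexivity|reflexivity].
  apply (computes_app2 _ _ Nat.add); [apply computes_add| |].
  - now apply (computes_proj _ _ 1).
  - now apply computes_succ, (computes_proj _ _ 0).
Qed.

Lemma tri_mono m n : m <= n -> tri m <= tri n.
Proof. induction 1; simpl; lia. Qed.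

Lemma cantor_pair_tri a b : cantor_pair a b = tri (a + b) + b.
Proof.
  unfold cantor_pair; f_equal.
  assert (Hdouble : forall w, w * (w + 1) = tri w * 2) by (induction w; simpl; nia).
  rewrite Hdouble; apply Nat.div_mul; lia.
Qed.

(* The diagonal [a + b] of a Cantor-paired value is found by unbounded search:
   it is the least [w] with [cantor_pair a b < tri (S w)]. *)
Lemma computes_cantor_diagonal :
  computes (fun p : nat * nat => unary (cantor_pair (fst p) (snd p)))
           (fun p => fst p + snd p).
Proof.
  assert (Hsearch : computes binary (fun p => S (snd p) - tri (S (fst p)))).
  { apply (computes_app2 _ _ Nat.sub); [apply computes_sub| |].
    - now apply computes_succ, (computes_proj _ _ 1).
    - apply (computes_app1 _ _ tri); [apply computes_tri|].
      now apply computes_succ, (computes_proj _ _ 0). }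
  destruct Hsearch as [c Hc]; exists (CMin c); intros [a b]; simpl.
  rewrite cantor_pair_tri; constructor.
  - replace 0 with (S (tri (a + b) + b) - tri (S (a + b))) by (cbn [tri]; lia).
    exact (Hc (a + b, tri (a + b) + b)).
  - intros z Hz; exists (tri (a + b) + b - tri (S z)).
    assert (tri (S z) <= tri (a + b)) by (apply tri_mono; lia).
    replace (S (tri (a + b) + b - tri (S z))) with (S (tri (a + b) + b) - tri (S z)) by lia.
    exact (Hc (z, tri (a + b) + b)).
Qed.

End Arithmetic.

Section Pointwise.
Local Open Scope nat_scope.
Variable A : Type.
Variable input : A -> list nat.
Variables f g : A -> nat.
Hypothesis Hf : computes input f.
Hypothesis Hg : computes input g.

Lemma computes_plus : computes input (fun a => f a + g a).
Proof. exact (computes_app2 _ _ Nat.add _ _ computes_add Hf Hg). Qed.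

Lemma computes_times : computes input (fun a => f a * g a).
Proof. exact (computes_app2 _ _ Nat.mul _ _ computes_mul Hf Hg). Qed.

Lemma computes_minus : computes input (fun a => f a - g a).
Proof. exact (computes_app2 _ _ Nat.sub _ _ computes_sub Hf Hg). Qed.

End Pointwise.

Section Rationals.
Local Open Scope nat_scope.
Variable A : Type.
Variable input : A -> list nat.

Lemma computes_unpair (f g : A -> nat) :
  computes input (fun a => cantor_pair (f a) (g a)) -> computes input f /\ computes input g.
Proof.
  intros Hpair.
  assert (Hdiag : computes input (fun a => f a + g a)).
  { exact (computes_comp1 _ _ _ _ _ (fun a => (f a, g a)) _ Hpair computes_cantor_diagonal
             (fun _ => eq_refl)). }
  assert (Hg : computes input g).
  { apply (computes_ext _ _ (fun a => cantor_pair (f a) (g a) - tri (f a + g a))).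
    - exact (computes_minus _ _ _ _ Hpair (computes_app1 _ _ tri _ computes_tri Hdiag)).
    - intros a; rewrite cantor_pair_tri; lia. }
  split; [|exact Hg].
  apply (computes_ext _ _ (fun a => (f a + g a) - g a)); [|intros; lia].
  exact (computes_minus _ _ _ _ Hdiag Hg).
Qed.

Lemma Z_to_nat_enc_Z (z : Z) :
  Z.to_nat z = Nat.div2 (enc_Z z) * (1 - parity (enc_Z z)).
Proof.
  pose proof (Nat.div2_odd (enc_Z z)) as Hdiv; unfold parity.
  destruct (Nat.odd (enc_Z z)), z as [|p|p]; simpl in *; lia.
Qed.

Lemma computes_Q_parts (r : A -> Q) :
  computes input (fun a => enc_Q (r a)) ->
  computes input (fun a => Z.to_nat (Qnum (r a))) /\
  computes input (fun a => Pos.to_nat (Qden (r a))).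
Proof.
  intros Hr; destruct (computes_unpair _ _ Hr) as [Hnum Hden]; split.
  - apply (computes_ext _ _ (fun a => Nat.div2 (enc_Z (Qnum (r a))) *
                                         (1 - parity (enc_Z (Qnum (r a)))))).
    + apply computes_times; [exact (computes_app1 _ _ _ _ computes_div2 Hnum)|].
      exact (computes_minus _ _ _ _ (computes_const _ _ 1)
               (computes_app1 _ _ _ _ computes_parity Hnum)).
    + intros a; symmetry; apply Z_to_nat_enc_Z.
  - apply (computes_ext _ _ (fun a => S (Pos.to_nat (Qden (r a)) - 1))); [|intros; lia].
    exact (computes_succ _ _ _ Hden).
Qed.

Definition Qfrac (n d : nat) : Q := Qmake (Z.of_nat n) (Pos.of_nat d).

Lemma enc_Q_Qfrac (n d : nat) : enc_Q (Qfrac n (S d)) = cantor_pair (2 * n) d.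
Proof.
  unfold enc_Q, Qfrac; cbn [Qnum Qden].
  rewrite Nat2Pos.id by lia; f_equal; [|lia].
  destruct n as [|n]; [reflexivity|].
  simpl; rewrite SuccNat2Pos.id_succ; lia.
Qed.

Lemma computes_Qfrac (n d : A -> nat) :
  computes input n -> computes input d ->
  computes input (fun a => enc_Q (Qfrac (n a) (S (d a)))).
Proof.
  intros Hn Hd.
  apply (computes_ext _ _ (fun a => tri (2 * n a + d a) + d a)).
  - apply computes_plus; [|exact Hd].
    apply (computes_app1 _ _ tri); [apply computes_tri|].
    exact (computes_plus _ _ _ _ (computes_times _ _ _ _ (computes_const _ _ 2) Hn) Hd).
  - intros a; rewrite enc_Q_Qfrac, cantor_pair_tri; reflexivity.
Qed.

Lemma computes_case_zero (t u v : A -> nat) :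
  computes input t -> computes input u -> computes input v ->
  computes input (fun a => if t a =? 0 then u a else v a).
Proof.
  intros Ht Hu Hv.
  assert (Hneg := computes_minus _ _ _ _ (computes_const _ _ 1) Ht).
  apply (computes_ext _ _ (fun a => u a * (1 - t a) + v a * (1 - (1 - t a)))).
  - apply computes_plus; [exact (computes_times _ _ _ _ Hu Hneg)|].
    exact (computes_times _ _ _ _ Hv (computes_minus _ _ _ _ (computes_const _ _ 1) Hneg)).
  - intros a; destruct (t a); simpl; lia.
Qed.

End Rationals.

(** * The rational majorant of a computable test supermartingale *)

(* The approximation of [T s] used at [s]: its precision [2^-(enc_str s + 3)]
   shrinks geometrically along every path, which pays for the rounding. *)
Definition approx_at (q : bstring -> nat -> Q) (s : bstring) : Q :=
  q s (enc_str s + 3)%nat.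

(* [R(s) = (max(0, q_s) + 1/(enc_str s + 1)) / 2] off the root, and [R(nil) = 1]. *)
Definition majorant (q : bstring -> nat -> Q) (s : bstring) : Q :=
  match s with
  | nil => 1%Q
  | _ :: _ =>
      let m := Z.to_nat (Qnum (approx_at q s)) in
      let d := Pos.to_nat (Qden (approx_at q s)) in
      let x := enc_str s in
      Qfrac (m * (x + 1) + d) (2 * d * (x + 1))
  end.

Lemma majorant_recursive (q : bstring -> nat -> Q) :
  recursive_SNQ q -> recursive_SQ (majorant q).
Proof.
  intros [c Hc].
  set (input := fun s => unary (enc_str s)).
  assert (Hx : computes input enc_str) by now apply (computes_proj _ _ 0).
  assert (Happrox : computes input (fun s => enc_Q (approx_at q s))).
  { apply (computes_comp2 _ _ _ (fun p : bstring * nat => enc_str (fst p) :: snd p :: nil)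
             (fun p => enc_Q (q (fst p) (snd p))) (fun s => (s, enc_str s + 3)%nat)
             enc_str (fun s => enc_str s + 3)%nat Hx); [| |reflexivity].
    - exact (computes_plus _ _ _ _ Hx (computes_const _ _ 3)).
    - exists c; intros [s N]; apply Hc. }
  destruct (computes_Q_parts _ _ _ Happrox) as [Hm Hd].
  assert (Hx1 := computes_plus _ _ _ _ Hx (computes_const _ _ 1)).
  assert (Hfrac := computes_Qfrac _ input _ _
    (computes_plus _ _ _ _ (computes_times _ _ _ _ Hm Hx1) Hd)
    (computes_minus _ _ _ _
       (computes_times _ _ _ _ (computes_times _ _ _ _ (computes_const _ _ 2) Hd) Hx1)
       (computes_const _ _ 1))).
  assert (Hcase := computes_case_zero _ _ _ _ _ Hx (computes_const _ _ 3) Hfrac).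
  change (computes input (fun s => enc_Q (majorant q s))).
  apply (computes_ext _ _ _ _ Hcase); intros [|b s]; [reflexivity|].
  rewrite (proj2 (Nat.eqb_neq _ 0)) by (simpl; destruct b; lia).
  unfold majorant; do 3 f_equal.
  pose proof (Pos2Nat.is_pos (Qden (approx_at q (b :: s)))); lia.
Qed.

(** * Real-valued estimates *)

Lemma Q2R_Qfrac (n d : nat) : (0 < d)%nat -> Q2R (Qfrac n d) = INR n / INR d.
Proof.
  intros Hd; unfold Q2R, Qfrac; cbn [Qnum Qden].
  rewrite <- INR_IZR_INZ, <- positive_nat_Z, <- INR_IZR_INZ, Nat2Pos.id by lia.
  reflexivity.
Qed.

Lemma INR_Z_to_nat (z : Z) : INR (Z.to_nat z) = Rmax 0 (IZR z).
Proof.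
  destruct z as [|p|p]; simpl Z.to_nat.
  - rewrite Rmax_left; simpl; lra.
  - rewrite Rmax_right, INR_IZR_INZ, positive_nat_Z; [reflexivity|].
    apply IZR_le; lia.
  - rewrite Rmax_left; [simpl; reflexivity|]. apply IZR_le; lia.
Qed.

Lemma Rmax0_closer (y t : R) : 0 <= t -> Rabs (Rmax 0 y - t) <= Rabs (y - t).
Proof.
  intros Ht; unfold Rmax; destruct (Rle_dec 0 y); [lra|].
  unfold Rabs; repeat destruct Rcase_abs; lra.
Qed.

(* The weight [1/(enc_str s + 1)] added to the majorant: it shrinks by a factor
   [2/3] at every step and dominates the approximation error. *)
Definition weight (s : bstring) : R := / (INR (enc_str s) + 1).

Lemma weight_pos (s : bstring) : 0 < weight s.
Proof. apply RinvN_pos. Qed.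

Lemma weight_nil : weight nil = 1.
Proof. unfold weight; simpl; rewrite Rplus_0_l; apply Rinv_1. Qed.

Lemma enc_str_snoc (s : bstring) (b : bool) :
  enc_str (s ++ b :: nil) = (enc_str s + 2 ^ length s * (if b then 2 else 1))%nat.
Proof. induction s as [|c s IH]; simpl; [destruct b; reflexivity|]; rewrite IH; destruct c, b; lia. Qed.

Lemma enc_str_bound (s : bstring) : (enc_str s + 2 <= 2 ^ S (length s))%nat.
Proof. induction s as [|c s IH]; simpl in *; [lia|destruct c; lia]. Qed.

Lemma weight_child (s : bstring) (b : bool) : weight (s ++ b :: nil) <= 2 / 3 * weight s.
Proof.
  assert (Hgrow : (3 * (enc_str s + 1) <= 2 * (enc_str (s ++ b :: nil) + 1))%nat).
  { rewrite enc_str_snoc; pose proof (enc_str_bound s); simpl in *; destruct b; lia. }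
  apply le_INR in Hgrow; rewrite !mult_INR, !plus_INR in Hgrow; simpl in Hgrow.
  unfold weight; pose proof (pos_INR (enc_str s)).
  replace (2 / 3 * / (INR (enc_str s) + 1)) with (/ (3 / 2 * (INR (enc_str s) + 1)))
    by (field; lra).
  apply Rinv_le_contravar; lra.
Qed.

Lemma INR_le_pow2 (n : nat) : INR n + 1 <= 2 ^ n.
Proof. induction n; [simpl; lra|]. rewrite S_INR; simpl; pose proof (pos_INR n); lra. Qed.

Lemma precision_le_weight (s : bstring) : / 2 ^ (enc_str s + 3) <= weight s / 8.
Proof.
  unfold weight, Rdiv; rewrite pow_add, <- Rinv_mult.
  pose proof (INR_le_pow2 (enc_str s)); pose proof (pos_INR (enc_str s)).
  apply Rinv_le_contravar; simpl; lra.
Qed.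

Lemma majorant_value (q : bstring -> nat -> Q) (s : bstring) : s <> nil ->
  Q2R (majorant q s) = (Rmax 0 (Q2R (approx_at q s)) + weight s) / 2.
Proof.
  intros Hs; destruct s as [|b s']; [congruence|].
  unfold majorant; cbv beta iota zeta.
  set (r := approx_at q (b :: s')); set (x := enc_str (b :: s')).
  assert (Hd : 0 < INR (Pos.to_nat (Qden r))) by apply pos_INR_nat_of_P.
  assert (Hr : Q2R r = IZR (Qnum r) / INR (Pos.to_nat (Qden r))).
  { unfold Q2R; rewrite INR_IZR_INZ, positive_nat_Z; reflexivity. }
  rewrite Q2R_Qfrac by (pose proof (Pos2Nat.is_pos (Qden r)); lia).
  rewrite Hr; repeat rewrite ?mult_INR, ?plus_INR; rewrite INR_Z_to_nat; unfold weight; fold x.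
  replace (Rmax 0 (IZR (Qnum r) / INR (Pos.to_nat (Qden r))))
    with (Rmax 0 (IZR (Qnum r)) / INR (Pos.to_nat (Qden r))).
  - pose proof (pos_INR x); simpl INR; field; lra.
  - unfold Rdiv; rewrite !(Rmult_comm _ (/ _)), <- RmaxRmult by (left; apply Rinv_0_lt_compat, Hd).
    rewrite Rmult_0_r; reflexivity.
Qed.

Section Majorant.
Variable phi : forecasting_system.
Variable T : bstring -> R.
Variable q : bstring -> nat -> Q.
Hypothesis HT : test_supermartingale phi T.
Hypothesis Hq : forall s N, Rabs (T s - Q2R (q s N)) <= / 2 ^ N.

Let R s := Q2R (majorant q s).

Lemma majorant_bounds (s : bstring) : s <> nil ->
  (T s + 7/8 * weight s) / 2 <= R s <= (T s + 9/8 * weight s) / 2.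
Proof.
  intros Hs; unfold R; rewrite majorant_value by exact Hs.
  destruct HT as [_ [HTnn _]].
  assert (Herr : Rabs (Rmax 0 (Q2R (approx_at q s)) - T s) <= weight s / 8).
  { eapply Rle_trans; [apply Rmax0_closer, HTnn|].
    rewrite Rabs_minus_sym; eapply Rle_trans; [apply Hq|apply precision_le_weight]. }
  apply Rabs_le_between in Herr; lra.
Qed.

Lemma majorant_nil : R nil = 1.
Proof. unfold R, Q2R; simpl; lra. Qed.

Lemma majorant_half (s : bstring) : T s / 2 <= R s.
Proof.
  destruct s as [|b s].
  - rewrite majorant_nil; destruct HT as [_ [_ HT1]]; rewrite HT1; lra.
  - pose proof (majorant_bounds (b :: s) ltac:(discriminate)); pose proof (weight_pos (b :: s)); lra.
Qed.

Lemma majorant_pos (s : bstring) : 0 < R s.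
Proof.
  destruct s as [|b s]; [rewrite majorant_nil; lra|].
  pose proof (majorant_bounds (b :: s) ltac:(discriminate)); pose proof (weight_pos (b :: s)).
  destruct HT as [_ [HTnn _]]; specialize (HTnn (b :: s)); lra.
Qed.

(* The supermartingale inequality: the error term of each child is at most
   [(9/8) (2/3) weight s = (3/4) weight s], which is absorbed by the term
   [(7/8) weight s] at [s]; at the root, [R nil = T nil = 1 = weight nil]. *)
Lemma majorant_supermartingale : supermartingale phi R.
Proof.
  intros s p Hp; destruct HT as [HTsuper [_ HT1]].
  assert (Hsup := HTsuper s p Hp).
  pose proof (lo_ge0 (phi s)); pose proof (hi_le1 (phi s)).
  assert (B1 := majorant_bounds (s ++ true :: nil) ltac:(destruct s; discriminate)).
  assert (B0 := majorant_bounds (s ++ false :: nil) ltac:(destruct s; discriminate)).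
  pose proof (weight_child s true); pose proof (weight_child s false); pose proof (weight_pos s).
  assert (Havg : p * R (s ++ true :: nil) + (1 - p) * R (s ++ false :: nil) <=
                 (T s + 3/4 * weight s) / 2).
  { assert (p * R (s ++ true :: nil) <=
            p * ((T (s ++ true :: nil) + 9/8 * (2/3 * weight s)) / 2))
      by (apply Rmult_le_compat_l; lra).
    assert ((1 - p) * R (s ++ false :: nil) <=
            (1 - p) * ((T (s ++ false :: nil) + 9/8 * (2/3 * weight s)) / 2))
      by (apply Rmult_le_compat_l; lra).
    nra. }
  destruct s as [|b s].
  - rewrite majorant_nil, HT1, weight_nil in *; lra.
  - pose proof (majorant_bounds (b :: s) ltac:(discriminate)); lra.
Qed.

Lemma majorant_test : test_supermartingale phi R.
Proof.
  split; [exact majorant_supermartingale|].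
  split; [intros s; left; apply majorant_pos|exact majorant_nil].
Qed.

End Majorant.

(** * Growth functions and limits superior *)

Lemma INR_div2_le (n : nat) : 2 * INR (Nat.div2 n) <= INR n.
Proof.
  replace 2 with (INR 2) by (simpl; lra); rewrite <- mult_INR; apply le_INR.
  pose proof (Nat.div2_odd n); lia.
Qed.

Lemma growth_function_div2 (rho : nat -> nat) :
  growth_function rho -> growth_function (fun n => Nat.div2 (rho n)).
Proof.
  intros [Hrec [Hmono Hunb]]; split; [|split].
  - exact (computes_app1 _ _ _ _ computes_div2 Hrec).
  - intros m n Hmn; apply Nat.div2_le_mono, Hmono, Hmn.
  - intros B; destruct (Hunb (2 * B + 1)%nat) as [n Hn]; exists n.
    pose proof (Nat.div2_odd (rho n)); destruct (Nat.odd (rho n)); simpl in *; lia.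
Qed.

Lemma LimSup_pos_of_half_le (u v : nat -> R) :
  (forall n, u n / 2 <= v n) -> Rbar_lt 0 (LimSup_seq u) -> Rbar_lt 0 (LimSup_seq v).
Proof.
  intros Huv Hu.
  assert (Hle : Rbar_le (LimSup_seq (fun n => / 2 * u n)) (LimSup_seq v)).
  { apply LimSup_le; exists 0%nat; intros n _; specialize (Huv n); lra. }
  rewrite (is_LimSup_seq_unique _ _ (is_LimSup_seq_scal_pos (/ 2) u _ ltac:(lra)
             (proj2_sig (ex_LimSup_seq u)))) in Hle.
  change (proj1_sig (ex_LimSup_seq u)) with (LimSup_seq u) in Hle.
  eapply Rbar_lt_le_trans; [|exact Hle].
  destruct (LimSup_seq u) as [l| |]; simpl in *; [lra| |tauto].
  destruct (Rle_dec 0 (/ 2)) as [H|H]; [|lra].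
  destruct (Rle_lt_or_eq_dec 0 (/ 2) H); [exact I|lra].
Qed.

Lemma recursive_SQ_computable (Rq : bstring -> Q) :
  recursive_SQ Rq -> computable_real_map (fun s => Q2R (Rq s)).
Proof.
  intros Hrec; exists (fun s _ => Rq s); split.
  - assert (Hpair : computes (fun p : bstring * nat => enc_str (fst p) :: snd p :: nil)
                             (fun p => enc_Q (Rq (fst p)))).
    { apply (computes_comp1 _ _ bstring (fun s => unary (enc_str s)) (fun s => enc_Q (Rq s))
               fst (fun p => enc_str (fst p))); [| |reflexivity].
      - now apply (computes_proj _ _ 0).
      - exact Hrec. }
    destruct Hpair as [c Hc]; exists c; intros s N; exact (Hc (s, N)).
  - intros s N; rewrite Rminus_diag, Rabs_R0; left; apply Rinv_0_lt_compat, pow_lt; lra.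
Qed.

Theorem proposition4p4 (phi : forecasting_system) (omega : outcome_seq) :
  schnorr_random phi omega <->
  ~ (exists (Rq : bstring -> Q) (rho : nat -> nat),
       recursive_SQ Rq /\
       (forall s, 0 < Q2R (Rq s)) /\
       test_supermartingale phi (fun s => Q2R (Rq s)) /\
       growth_function rho /\
       Rbar_lt 0 (LimSup_seq (fun n => Q2R (Rq (prefix omega n)) - INR (rho n)))).
Proof.
  split.
  - intros Hrandom [Rq [rho [Hrec [_ [HT [Hrho Hlim]]]]]].
    exact (Rbar_lt_not_le _ _ Hlim
             (Hrandom _ _ HT (recursive_SQ_computable Rq Hrec) Hrho)).
  - intros Hnone T rho HT [q [Hq Happrox]] Hrho.
    apply Rbar_not_lt_le; intros Hlim; apply Hnone.
    exists (majorant q), (fun n => Nat.div2 (rho n)).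
    split; [exact (majorant_recursive q Hq)|].
    split; [exact (majorant_pos phi T q HT Happrox)|].
    split; [exact (majorant_test phi T q HT Happrox)|].
    split; [exact (growth_function_div2 rho Hrho)|].
    refine (LimSup_pos_of_half_le _ _ _ Hlim); intros n; simpl.
    pose proof (majorant_half phi T q HT Happrox (prefix omega n)).
    pose proof (INR_div2_le (rho n)); lra.
Qed.
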